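(* Define rational functions of $\xi\in\mathbb C$ by $c_0=\frac1{\xi+10}$, $d_0=\frac{\xi+23}{(\xi+13)(\xi+10)}$, and for $j\ge1$, $v_j=(c_j,d_j)^T=N_jv_{j-1}$ with $$N_j=\begin{pmatrix}8j+10+\xi&0\\-13&8j+13+\xi\end{pmatrix}^{-1}\begin{pmatrix}8(j-1)&10\\0&8(j-1)\end{pmatrix}.$$ Let $\mathring c_0=\mathfrak F^{-1}(\frac{c_0}{d_0}-1)$, $\mathring d_0=0$, and $(\mathring c_j,\mathring d_j)=\mathfrak F^{-1}\big(\frac1{d_0}(c_j,d_j)\big)$ for $j\ge1$. Let $\mathring w_1,\mathring w_2$ solve on $[0,\infty)_t\times[0,\infty)_\gamma$ $$\partial_t\mathring w_1-4\gamma\partial_\gamma\mathring w_1+10\mathring w_1-\frac{10}{1+\gamma^2}\mathring w_2=130e^{-23t},\qquad \partial_t\mathring w_2-4\gamma\partial_\gamma\mathring w_2+13\mathring w_2-13\mathring w_1=130e^{-23t},$$ with $\mathring w_1(0)=-10\frac{\gamma^2}{1+\gamma^2}$, $\mathring w_2(0)=0$. Then each $\mathring c_k,\mathring d_k$ decays faster than $e^{-t}$ as $t\to\infty$, and for every integer $M\ge2$, with $A_M:=\sum_{j=1}^M\mathring c_j(t)(1+\gamma^2)^{-j}$, $B_M:=\sum_{j=1}^M\mathring d_j(t)(1+\gamma^2)^{-j}$, the errors $\alpha:=\mathring w_1-A_M$, $\beta:=\mathring w_2-B_M$ satisfy $$\partial_t\alpha-4\gamma\partial_\gamma\alpha+10\alpha-\frac{10}{1+\gamma^2}\beta=\frac{P_M(t)}{(1+\gamma^2)^{M+1}},\qquad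 \partial_t\beta-4\gamma\partial_\gamma\beta+13\beta-13\alpha=\frac{Q_M(t)}{(1+\gamma^2)^{M+1}},$$ where $P_M=8M\mathring c_M+10\mathring d_M$ and $Q_M=8M\mathring d_M$.
   Context: $\hat f(\xi)=\int_0^\infty e^{-\xi t}f(t)dt$ is the Laplace transform and $\mathfrak F^{-1}$ the inverse Laplace transform (applied componentwise). *)

From Stdlib Require Import Reals.
From Coquelicot Require Import Coquelicot.
Open Scope R_scope.

Record mat2 := Mat2 { m11 : R; m12 : R; m21 : R; m22 : R }.

Definition mat2_inv (A : mat2) : mat2 :=
  let det := m11 A * m22 A - m12 A * m21 A in
  Mat2 (m22 A / det) (- m12 A / det) (- m21 A / det) (m11 A / det).

Definition mat2_mul (A B : mat2) : mat2 :=
  Mat2 (m11 A * m11 B + m12 A * m21 B) (m11 A * m12 B + m12 A * m22 B)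
       (m21 A * m11 B + m22 A * m21 B) (m21 A * m12 B + m22 A * m22 B).

Definition mat2_app (A : mat2) (v : R * R) : R * R :=
  (m11 A * fst v + m12 A * snd v, m21 A * fst v + m22 A * snd v).

Definition Nmat (j : nat) (xi : R) : mat2 :=
  mat2_mul
    (mat2_inv (Mat2 (8 * INR j + 10 + xi) 0 (-13) (8 * INR j + 13 + xi)))
    (Mat2 (8 * (INR j - 1)) 10 0 (8 * (INR j - 1))).

Fixpoint vcd (j : nat) (xi : R) : R * R :=
  match j with
  | O => (1 / (xi + 10), (xi + 23) / ((xi + 13) * (xi + 10)))
  | S k => mat2_app (Nmat (S k) xi) (vcd k xi)
  end.

Definition c (j : nat) (xi : R) : R := fst (vcd j xi).
Definition d (j : nat) (xi : R) : R := snd (vcd j xi).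

Definition is_laplace (f : R -> R) (xi : R) (l : R) : Prop :=
  is_RInt_gen (fun t => exp (- xi * t) * f t)
    (at_point 0) (Rbar_locally p_infty) l.

Definition IsInvLaplace (f : R -> R) (F : R -> R) : Prop :=
  (forall t, 0 < t -> continuous f t) /\
  exists sigma : R, forall xi, sigma < xi -> is_laplace f xi (F xi).

Definition decays_faster_than_exp (f : R -> R) : Prop :=
  is_lim (fun t => exp t * f t) p_infty 0.

(* The transforms c_j/d_0, d_j/d_0 (j >= 1) and c_0/d_0 - 1 are finite sums of simple
   fractions a/(xi + lam) with every lam > 1: each step of v_j = N_j v_(j-1) divides by
   xi + 8j + 10 or xi + 8j + 13, which in the time variable solves y' + mu y = g with
   y(0) = 0.  By Lerch's uniqueness theorem, proved through the moment problem on [0, 1]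
   after the substitution y = exp(-t), the continuous inverse transforms cr j, dr j are
   these exponential sums on (0, +oo).  Hence they decay faster than exp(-t) and, for
   j >= 1, satisfy
     cr_j' + (8j + 10) cr_j = 8(j - 1) cr_(j-1) + 10 dr_(j-1),
     dr_j' + (8j + 13) dr_j = 13 cr_j + 8(j - 1) dr_(j-1).
   The operator d_t - 4 gamma d_gamma maps cr_j (1 + gamma^2)^-j to
   (cr_j' + 8j cr_j) (1 + gamma^2)^-j - 8j cr_j (1 + gamma^2)^-(j+1), so these recursions
   make the residual of the truncated series telescope down to P_M and Q_M. *)

From Stdlib Require Import Reals Lra Psatz List.
From Coquelicot Require Import Coquelicot.
Open Scope R_scope.

(* A list of pairs [(a, lam)] encodes the exponential sum [t |-> sum a exp (- lam t)]. *)
Definition es_eval (l : list (R * R)) (t : R) : R :=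
  fold_right (fun p acc => fst p * exp (- snd p * t) + acc) 0 l.

Definition es_deriv (l : list (R * R)) : list (R * R) :=
  map (fun p => (- snd p * fst p, snd p)) l.

Definition es_laplace (l : list (R * R)) (xi : R) : R :=
  fold_right (fun p acc => fst p / (xi + snd p) + acc) 0 l.

Definition es_scale (k : R) (l : list (R * R)) : list (R * R) :=
  map (fun p => (k * fst p, snd p)) l.

Definition es_particular (mu : R) (l : list (R * R)) : list (R * R) :=
  map (fun p => (fst p / (mu - snd p), snd p)) l.

(* The solution of [y' + mu y = es_eval l] with [y 0 = 0]. *)
Definition es_solve (mu : R) (l : list (R * R)) : list (R * R) :=
  (- es_eval (es_particular mu l) 0, mu) :: es_particular mu l.

Definition es_rates (P : R -> Prop) (l : list (R * R)) : Prop :=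
  List.Forall (fun p => P (snd p)) l.

Lemma es_eval_app l1 l2 t : es_eval (l1 ++ l2) t = es_eval l1 t + es_eval l2 t.
Proof. induction l1 as [|p l IH]; simpl; [|rewrite IH]; ring. Qed.

Lemma es_laplace_app l1 l2 xi :
  es_laplace (l1 ++ l2) xi = es_laplace l1 xi + es_laplace l2 xi.
Proof. induction l1 as [|p l IH]; simpl; [|rewrite IH]; ring. Qed.

Lemma es_eval_scale k l t : es_eval (es_scale k l) t = k * es_eval l t.
Proof. induction l as [|p l IH]; simpl; [|rewrite IH]; simpl; ring. Qed.

Lemma es_laplace_scale k l xi : es_laplace (es_scale k l) xi = k * es_laplace l xi.
Proof. induction l as [|p l IH]; simpl; [|rewrite IH]; simpl; unfold Rdiv; ring. Qed.

Lemma is_derive_es_eval l t : is_derive (es_eval l) t (es_eval (es_deriv l) t).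
Proof.
  induction l as [|p l IH]; simpl.
  - apply (@is_derive_const R_AbsRing R_NormedModule 0).
  - apply (is_derive_plus (fun t => fst p * exp (- snd p * t)) (es_eval l)); [|exact IH].
    auto_derive; [easy|ring].
Qed.

Lemma continuous_es_eval l t : continuous (es_eval l) t.
Proof. apply (@ex_derive_continuous R_AbsRing R_NormedModule); eexists; apply is_derive_es_eval. Qed.

Lemma es_rates_impl (P Q : R -> Prop) l :
  (forall x, P x -> Q x) -> es_rates P l -> es_rates Q l.
Proof. intros PQ; apply List.Forall_impl; auto. Qed.

Lemma es_rates_app P l1 l2 : es_rates P l1 -> es_rates P l2 -> es_rates P (l1 ++ l2).
Proof. intros; apply Forall_app; split; assumption. Qed.

Lemma es_rates_scale P k l : es_rates P l -> es_rates P (es_scale k l).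
Proof. intros H; apply Forall_map; exact H. Qed.

Lemma es_rates_solve P mu l : P mu -> es_rates P l -> es_rates P (es_solve mu l).
Proof. intros Hmu H; constructor; [exact Hmu | apply Forall_map; exact H]. Qed.

Lemma es_particular_ode mu l t : es_rates (fun x => x <> mu) l ->
  es_eval (es_deriv (es_particular mu l)) t + mu * es_eval (es_particular mu l) t
  = es_eval l t.
Proof.
  induction 1 as [|p l Hp _ IH]; simpl in *; [ring|].
  rewrite <- IH; field; lra.
Qed.

Lemma es_solve_ode mu l t : es_rates (fun x => x <> mu) l ->
  es_eval (es_deriv (es_solve mu l)) t + mu * es_eval (es_solve mu l) t = es_eval l t.
Proof. intros H; rewrite <- (es_particular_ode mu l t H); simpl; ring. Qed.

Lemma es_laplace_particular mu l xi :
  es_rates (fun x => x <> mu /\ xi + x <> 0) l -> xi + mu <> 0 ->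
  es_laplace (es_particular mu l) xi
  = (es_laplace l xi + es_eval (es_particular mu l) 0) / (xi + mu).
Proof.
  intros H Hmu; induction H as [|p l [Hp Hxp] _ IH]; simpl in *; [field; lra|].
  rewrite IH, Rmult_0_r, exp_0; field; lra.
Qed.

Lemma es_laplace_solve mu l xi :
  es_rates (fun x => x <> mu /\ xi + x <> 0) l -> xi + mu <> 0 ->
  es_laplace (es_solve mu l) xi = es_laplace l xi / (xi + mu).
Proof.
  intros H Hmu; simpl; rewrite (es_laplace_particular mu l xi H Hmu); field; lra.
Qed.

Lemma is_lim_exp_neg_mult k : 0 < k -> is_lim (fun t => exp (- k * t)) p_infty 0.
Proof.
  intros Hk.
  apply (is_lim_comp exp (fun t => - k * t) p_infty 0 m_infty).
  - exact is_lim_exp_m.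
  - replace m_infty with (Rbar_mult (- k) p_infty)
      by (simpl; case Rle_dec; intros; [exfalso; lra | reflexivity]).
    apply (is_lim_scal_l (fun t => t)); apply is_lim_id.
  - exists 0; intros; discriminate.
Qed.

Lemma es_eval_decays l : es_rates (fun x => 1 < x) l -> decays_faster_than_exp (es_eval l).
Proof.
  unfold decays_faster_than_exp; induction 1 as [|p l Hp _ IH]; simpl.
  - apply (is_lim_ext (fun _ => 0)); [intros; ring | apply is_lim_const].
  - apply (is_lim_ext (fun t => fst p * exp (- (snd p - 1) * t) + exp t * es_eval l t)).
    { intros t; replace (- (snd p - 1) * t) with (t + - snd p * t) by ring.
      rewrite exp_plus; ring. }
    replace (Finite 0) with (Rbar_plus (Rbar_mult (fst p) 0) 0) by (simpl; f_equal; ring).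
    apply (is_lim_plus _ _ _ (Rbar_mult (fst p) 0) 0); [|exact IH|easy].
    apply (is_lim_scal_l (fun t => exp (- (snd p - 1) * t))), is_lim_exp_neg_mult; lra.
Qed.

Lemma is_laplace_ext f g xi l :
  (forall t, f t = g t) -> is_laplace f xi l -> is_laplace g xi l.
Proof.
  intros E; apply is_RInt_gen_ext; apply filter_forall; intros ab t _; now rewrite E.
Qed.

Lemma is_laplace_plus f g xi lf lg : is_laplace f xi lf -> is_laplace g xi lg ->
  is_laplace (fun t => f t + g t) xi (lf + lg).
Proof.
  intros Hf Hg; eapply is_RInt_gen_ext; [|exact (is_RInt_gen_plus _ _ _ _ Hf Hg)].
  apply filter_forall; intros ab t _; symmetry; apply Rmult_plus_distr_l.
Qed.

Lemma is_laplace_minus f g xi lf lg : is_laplace f xi lf -> is_laplace g xi lg ->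
  is_laplace (fun t => f t - g t) xi (lf - lg).
Proof.
  intros Hf Hg; eapply is_RInt_gen_ext; [|exact (is_RInt_gen_minus _ _ _ _ Hf Hg)].
  apply filter_forall; intros ab t _; symmetry; apply Rmult_minus_distr_l.
Qed.

Lemma is_laplace_exp a lam xi : 0 < xi + lam ->
  is_laplace (fun t => a * exp (- lam * t)) xi (a / (xi + lam)).
Proof.
  intros H.
  set (F := fun t => - a / (xi + lam) * exp (- (xi + lam) * t)).
  assert (DF : forall t, is_derive F t (exp (- xi * t) * (a * exp (- lam * t)))).
  { intros t; unfold F; auto_derive; [easy|].
    replace (- (xi + lam) * t) with (- xi * t + - lam * t) by ring.
    rewrite exp_plus; field; lra. }
  replace (a / (xi + lam)) with (0 - F 0) by (unfold F; rewrite Rmult_0_r, exp_0; field; lra).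
  eapply is_RInt_gen_ext; [|apply (is_RInt_gen_Derive F)].
  - apply filter_forall; intros ab t _; apply is_derive_unique, DF.
  - apply filter_forall; intros ab t _; eexists; apply DF.
  - apply filter_forall; intros ab t _.
    apply (continuous_ext (fun t => exp (- xi * t) * (a * exp (- lam * t)))).
    { intros; symmetry; apply is_derive_unique, DF. }
    apply (@ex_derive_continuous R_AbsRing R_NormedModule); auto_derive; easy.
  - intros P HP; exact (locally_singleton _ _ HP).
  - change (is_lim F p_infty 0).
    replace (Finite 0) with (Rbar_mult (- a / (xi + lam)) 0) by (simpl; f_equal; ring).
    apply (is_lim_scal_l (fun t => exp (- (xi + lam) * t))), is_lim_exp_neg_mult; exact H.
Qed.

Lemma is_laplace_es_eval l xi : es_rates (fun x => 0 < xi + x) l ->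
  is_laplace (es_eval l) xi (es_laplace l xi).
Proof.
  induction 1 as [|p l Hp _ IH].
  - apply (is_laplace_ext (fun t => 0 * exp (- (1 - xi) * t))); [intros; simpl; ring|].
    replace (es_laplace nil xi) with (0 / (xi + (1 - xi))) by (simpl; field; lra).
    apply is_laplace_exp; lra.
  - apply (is_laplace_plus (fun t => fst p * exp (- snd p * t)) (es_eval l));
      [apply is_laplace_exp|]; assumption.
Qed.

(* Extending [f] by 0 on (-oo, 0] makes [prim f] a primitive that is continuous
   everywhere, although [f] need only be integrable on bounded subintervals of [0, +oo). *)
Definition zero_ext (f : R -> R) (t : R) : R := if Rlt_dec 0 t then f t else 0.

Definition prim (f : R -> R) (x : R) : R := RInt (zero_ext f) 0 x.

Section Primitive.

Variable f : R -> R.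
Hypothesis f_int : forall b, 0 <= b -> ex_RInt f 0 b.

Lemma ex_RInt_zero_ext a b : ex_RInt (zero_ext f) a b.
Proof.
  assert (H0 : forall b, ex_RInt (zero_ext f) 0 b).
  { intros c; destruct (Rle_lt_dec 0 c) as [Hc | Hc].
    - apply (ex_RInt_ext f); [|exact (f_int c Hc)].
      intros x Hx; rewrite Rmin_left, Rmax_right in Hx by lra.
      unfold zero_ext; destruct (Rlt_dec 0 x); [reflexivity | lra].
    - apply (ex_RInt_ext (fun _ => 0)); [|apply ex_RInt_const].
      intros x Hx; rewrite Rmin_right, Rmax_left in Hx by lra.
      unfold zero_ext; destruct (Rlt_dec 0 x); [lra | reflexivity]. }
  exact (ex_RInt_Chasles _ _ _ _ (ex_RInt_swap _ _ _ (H0 a)) (H0 b)).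
Qed.

Lemma prim_nonneg b : 0 <= b -> prim f b = RInt f 0 b.
Proof.
  intros Hb; apply RInt_ext; intros x Hx; rewrite Rmin_left, Rmax_right in Hx by lra.
  unfold zero_ext; destruct (Rlt_dec 0 x); [reflexivity | lra].
Qed.

Lemma prim_at_0 : prim f 0 = 0.
Proof. apply (RInt_point (V := R_CompleteNormedModule)). Qed.

Lemma is_RInt_prim b : is_RInt (zero_ext f) 0 b (prim f b).
Proof. apply (RInt_correct (V := R_CompleteNormedModule)), ex_RInt_zero_ext. Qed.

Lemma continuous_prim b : continuous (prim f) b.
Proof. apply (continuous_RInt_1 (zero_ext f) 0 b); apply filter_forall, is_RInt_prim. Qed.

Lemma is_derive_prim b : 0 < b -> continuous f b -> is_derive (prim f) b (f b).
Proof.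
  intros Hb Hc.
  replace (f b) with (zero_ext f b) by (unfold zero_ext; destruct (Rlt_dec 0 b); [reflexivity | lra]).
  apply (is_derive_RInt (zero_ext f) (prim f) 0 b); [apply filter_forall, is_RInt_prim|].
  apply (continuous_ext_loc _ f); [|exact Hc].
  apply (filter_imp (fun z => 0 < z)); [|now apply open_gt].
  intros z Hz; unfold zero_ext; destruct (Rlt_dec 0 z); [reflexivity | lra].
Qed.

End Primitive.

Lemma RInt_ge_const (f : R -> R) a b m : a <= b -> ex_RInt f a b ->
  (forall x, a < x < b -> m <= f x) -> (b - a) * m <= RInt f a b.
Proof.
  intros Hab Hf Hm; replace ((b - a) * m) with (RInt (fun _ => m) a b)
    by (rewrite RInt_const; reflexivity).
  apply RInt_le; auto; apply ex_RInt_const.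
Qed.

Lemma RInt_ge_bump (f : R -> R) a r m M : 0 <= a - r -> a + r <= 1 -> 0 <= r ->
  (forall b c, ex_RInt f b c) -> (forall x, 0 < x < 1 -> - M <= f x) ->
  (forall x, a - r < x < a + r -> m <= f x) ->
  2 * r * m - (1 - 2 * r) * M <= RInt f 0 1.
Proof.
  intros H0 H1 Hr Hf Hlow Hbump.
  rewrite <- (RInt_Chasles f 0 (a - r) 1), <- (RInt_Chasles f (a - r) (a + r) 1) by auto.
  assert (L1 := RInt_ge_const f 0 (a - r) (- M) H0 (Hf _ _) ltac:(intros; apply Hlow; lra)).
  assert (L2 := RInt_ge_const f (a - r) (a + r) m ltac:(lra) (Hf _ _) Hbump).
  assert (L3 := RInt_ge_const f (a + r) 1 (- M) H1 (Hf _ _) ltac:(intros; apply Hlow; lra)).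
  change plus with Rplus; nra.
Qed.

Lemma RInt_lin_comb3 (f f1 f2 f3 : R -> R) c1 c2 c3 a b :
  ex_RInt f1 a b -> ex_RInt f2 a b -> ex_RInt f3 a b ->
  (forall x, f x = c1 * f1 x + c2 * f2 x + c3 * f3 x) ->
  RInt f a b = c1 * RInt f1 a b + c2 * RInt f2 a b + c3 * RInt f3 a b.
Proof.
  intros H1 H2 H3 Hf; apply is_RInt_unique.
  apply (is_RInt_ext (fun x => c1 * f1 x + c2 * f2 x + c3 * f3 x)); [intros; auto|].
  apply (is_RInt_plus _ _ _ _ _ _ (is_RInt_plus _ _ _ _ _ _
    (is_RInt_scal _ _ _ c1 _ (RInt_correct _ _ _ H1))
    (is_RInt_scal _ _ _ c2 _ (RInt_correct _ _ _ H2)))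
    (is_RInt_scal _ _ _ c3 _ (RInt_correct _ _ _ H3))).
Qed.

Lemma continuous_pos_near (f : R -> R) a : 0 < a < 1 -> continuous f a -> 0 < f a ->
  exists d, 0 < d /\ 2 * d <= a /\ 2 * d <= 1 - a /\
            forall u, Rabs (u - a) < 2 * d -> f a / 2 < f u.
Proof.
  intros Ha Hc Hpos.
  apply continuity_pt_filterlim in Hc; rewrite continuity_pt_locally in Hc.
  destruct (Hc (mkposreal (f a / 2) ltac:(lra))) as [eps Heps].
  pose proof (cond_pos eps); pose proof (Rmin_l eps (Rmin a (1 - a)));
    pose proof (Rmin_r eps (Rmin a (1 - a))); pose proof (Rmin_l a (1 - a));
    pose proof (Rmin_r a (1 - a)).
  assert (0 < Rmin eps (Rmin a (1 - a))) by (repeat apply Rmin_glb_lt; lra).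
  exists (Rmin eps (Rmin a (1 - a)) / 2); repeat split; try lra.
  intros u Hu; specialize (Heps u ltac:(change (Rabs (u - a) < eps); lra)).
  simpl in Heps; apply Rabs_lt_between in Heps; lra.
Qed.

Lemma continuous_bounded_01 (f : R -> R) : (forall u, continuous f u) ->
  exists M, 0 <= M /\ forall u, 0 <= u <= 1 -> Rabs (f u) <= M.
Proof.
  intros Hc.
  destruct (ex_RInt_ub f 0 1 (ex_RInt_continuous (V := R_CompleteNormedModule) _ _ _
              (fun u _ => Hc u))) as [M HM].
  assert (HM' : forall u, 0 <= u <= 1 -> Rabs (f u) <= M)
    by (intros u Hu; apply HM; rewrite Rmin_left, Rmax_right; lra).
  exists M; split; [|exact HM'].
  pose proof (HM' 0 ltac:(lra)); pose proof (Rabs_pos (f 0)); lra.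
Qed.

Definition peak (a d u : R) : R := 1 + d ^ 2 / 2 - (u - a) ^ 2.

Lemma peak_pos a d u : 0 < a < 1 -> 0 < u < 1 -> 0 < peak a d u.
Proof. intros; unfold peak; nra. Qed.

Lemma peak_le_1 a d u : 0 < d -> 2 * d <= Rabs (u - a) -> peak a d u <= 1.
Proof.
  intros Hd Hu.
  assert (2 * d * (2 * d) <= Rabs (u - a) * Rabs (u - a)) by (apply Rmult_le_compat; lra).
  unfold peak; rewrite <- (pow2_abs (u - a)); nra.
Qed.

Lemma peak_ge a d u : Rabs (u - a) < d / 2 -> 1 + d ^ 2 / 4 <= peak a d u.
Proof.
  intros Hu; pose proof (Rabs_pos (u - a)).
  assert (Rabs (u - a) * Rabs (u - a) <= d / 2 * (d / 2)) by (apply Rmult_le_compat; lra).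
  unfold peak; rewrite <- (pow2_abs (u - a)); nra.
Qed.

Section Moments.

Variable psi : R -> R.
Hypothesis psi_cont : forall u, continuous psi u.
Hypothesis psi_moments : forall k, RInt (fun u => u ^ k * psi u) 0 1 = 0.

Lemma continuous_poly_mul (p : R -> R) : (forall u, ex_derive p u) ->
  forall u, continuous (fun u => p u * psi u) u.
Proof.
  intros Hp u; apply (continuous_mult p psi); [|apply psi_cont].
  apply (@ex_derive_continuous R_AbsRing R_NormedModule), Hp.
Qed.

Lemma moments_mul_quadratic_pow al be ga N k :
  RInt (fun u => u ^ k * ((al + be * u + ga * u ^ 2) ^ N * psi u)) 0 1 = 0.
Proof.
  revert k; induction N as [|N IH]; intros k.
  - rewrite <- (psi_moments k) at 2; apply RInt_ext; intros; simpl; ring.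
  - set (g j u := u ^ j * ((al + be * u + ga * u ^ 2) ^ N * psi u)).
    assert (Hg : forall j, ex_RInt (g j) 0 1).
    { intros j; apply (ex_RInt_continuous (V := R_CompleteNormedModule)); intros u _.
      apply (continuous_ext (fun u => (u ^ j * (al + be * u + ga * u ^ 2) ^ N) * psi u)).
      { intros; apply Rmult_assoc. }
      apply continuous_poly_mul; intros; auto_derive; easy. }
    rewrite (RInt_lin_comb3 _ (g k) (g (S k)) (g (S (S k))) al be ga) by
      (auto; intros u; unfold g; simpl; ring).
    unfold g; rewrite !IH, !Rmult_0_r, !Rplus_0_r; reflexivity.
Qed.

Lemma moments_mul_peak_pow a d N : RInt (fun u => peak a d u ^ N * psi u) 0 1 = 0.
Proof.
  rewrite <- (moments_mul_quadratic_pow (1 + d ^ 2 / 2 - a ^ 2) (2 * a) (-1) N 0) at 2.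
  apply RInt_ext; intros u _; unfold peak; rewrite pow_O, Rmult_1_l; do 2 f_equal; ring.
Qed.

(* Integrating against [peak a d ^ N], a polynomial concentrating at [a] as [N] grows,
   picks up a contribution of order [(1 + d^2/4)^N psi a] near [a], against a bounded
   one elsewhere. *)
Lemma moments_vanish_not_pos a : 0 < a < 1 -> ~ 0 < psi a.
Proof.
  intros Ha Hpos.
  destruct (continuous_pos_near psi a Ha (psi_cont a) Hpos) as [d [Hd [Hda [Hda' Hnear]]]].
  destruct (continuous_bounded_01 psi psi_cont) as [M [M0 HM]].
  destruct (INR_unbounded (8 * (M + 1) / (d ^ 3 * psi a))) as [N HN].
  set (f u := peak a d u ^ N * psi u).
  assert (Hlow : forall u, 0 < u < 1 -> - M <= f u).
  { intros u Hu; unfold f.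
    assert (0 < peak a d u ^ N) by (apply pow_lt, peak_pos; assumption).
    destruct (Rlt_le_dec (Rabs (u - a)) (2 * d)) as [Hin | Hout].
    - assert (psi a / 2 < psi u) by (apply Hnear, Hin); nra.
    - assert (peak a d u ^ N <= 1).
      { rewrite <- (pow1 N); apply pow_incr; split; [apply Rlt_le, peak_pos; assumption|].
        apply peak_le_1; assumption. }
      pose proof (HM u ltac:(lra)) as Hb; apply Rabs_le_between in Hb.
      destruct (Rle_lt_dec 0 (psi u)); nra. }
  assert (Hbump : forall u, a - d / 2 < u < a + d / 2 ->
            (1 + d ^ 2 / 4) ^ N * (psi a / 2) <= f u).
  { intros u Hu; assert (Hua : Rabs (u - a) < d / 2) by (apply Rabs_def1; lra).
    assert (psi a / 2 < psi u) by (apply Hnear; lra).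
    assert ((1 + d ^ 2 / 4) ^ N <= peak a d u ^ N)
      by (apply pow_incr; split; [nra | apply peak_ge, Hua]).
    assert (0 < (1 + d ^ 2 / 4) ^ N) by (apply pow_lt; nra).
    apply Rmult_le_compat; lra. }
  assert (Hf : forall b c, ex_RInt f b c).
  { intros b c; apply (ex_RInt_continuous (V := R_CompleteNormedModule)); intros u _.
    apply continuous_poly_mul; intros; unfold peak; auto_derive; easy. }
  pose proof (RInt_ge_bump f a (d / 2) _ M ltac:(lra) ltac:(lra) ltac:(lra) Hf Hlow Hbump) as B.
  assert (If : RInt f 0 1 = 0) by apply moments_mul_peak_pow.
  rewrite If in B.
  pose proof (Rle_pow_lin (d ^ 2 / 4) N ltac:(nra)) as Bernoulli.
  assert (0 < d ^ 3 * psi a) by (apply Rmult_lt_0_compat; [apply pow_lt|]; lra).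
  assert (8 * (M + 1) < INR N * (d ^ 3 * psi a)).
  { apply (Rmult_lt_compat_r (d ^ 3 * psi a)) in HN; [|assumption].
    unfold Rdiv in HN; rewrite Rmult_assoc, Rinv_l in HN by lra; lra. }
  assert (d * (psi a / 2) * (1 + INR N * (d ^ 2 / 4)) <= d * (psi a / 2) * (1 + d ^ 2 / 4) ^ N)
    by (apply Rmult_le_compat_l; [nra | exact Bernoulli]).
  replace (d ^ 3) with (d * d ^ 2) in * by ring.
  nra.
Qed.

End Moments.

Lemma moments_vanish (psi : R -> R) : (forall u, continuous psi u) ->
  (forall k, RInt (fun u => u ^ k * psi u) 0 1 = 0) -> forall a, 0 < a < 1 -> psi a = 0.
Proof.
  intros Hc Hm a Ha.
  destruct (Rtotal_order (psi a) 0) as [Hneg | [Hz | Hpos]]; [exfalso | exact Hz | exfalso].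
  - apply (moments_vanish_not_pos (fun u => - psi u)) with a; [| |exact Ha|lra].
    + intros u; apply (continuous_opp psi), Hc.
    + intros k; transitivity (- RInt (fun u => u ^ k * psi u) 0 1); [|rewrite Hm; apply Ropp_0].
      apply is_RInt_unique.
      apply (is_RInt_ext (fun u => opp (u ^ k * psi u))); [intros; apply Ropp_mult_distr_r|].
      apply (is_RInt_opp (V := R_NormedModule)), (RInt_correct (V := R_CompleteNormedModule)).
      apply (ex_RInt_continuous (V := R_CompleteNormedModule)); intros u _.
      apply continuous_poly_mul; [exact Hc | intros; auto_derive; easy].
  - exact (moments_vanish_not_pos psi Hc Hm a Ha Hpos).
Qed.

Lemma is_RInt_gen_at_point_p_infty (f : R -> R) a l :
  is_RInt_gen f (at_point a) (Rbar_locally p_infty) l ->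
  (forall b, a <= b -> ex_RInt f a b) /\ is_lim (fun b => RInt f a b) p_infty l.
Proof.
  intros H.
  assert (Hev : forall eps : posreal, exists M, forall b, M < b ->
            ex_RInt f a b /\ Rabs (RInt f a b - l) < eps).
  { intros eps.
    destruct (H (fun y => Rabs (y - l) < eps) (locally_ball l eps))
      as [Q Pinf HQ [M HM] HQP].
    exists M; intros b Hb.
    destruct (HQP a b HQ (HM b Hb)) as [y [Hy Py]]; simpl in Hy.
    split; [now exists y | now rewrite (is_RInt_unique _ _ _ _ Hy)]. }
  split.
  - intros b Hb; destruct (Hev (mkposreal 1 Rlt_0_1)) as [M HM].
    apply (ex_RInt_Chasles_1 (V := R_CompleteNormedModule) _ a b (Rmax M b + 1));
      [pose proof (Rmax_r M b); lra|].
    apply HM; pose proof (Rmax_l M b); lra.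
  - apply is_lim_spec; intros eps; destruct (Hev eps) as [M HM].
    exists M; intros b Hb; apply HM, Hb.
Qed.

Lemma is_lim_const_eq c l : is_lim (fun _ => c) p_infty l -> Finite c = l.
Proof. intros H; rewrite <- (is_lim_unique _ _ _ H); symmetry; apply Lim_const. Qed.

Lemma pow_exp_INR x n : exp x ^ n = exp (INR n * x).
Proof.
  induction n as [|n IH]; [simpl; rewrite Rmult_0_l, exp_0; reflexivity|].
  rewrite <- tech_pow_Rmult, IH, <- exp_plus, S_INR; f_equal; ring.
Qed.

Definition log_pullback (H : R -> R) (y : R) : R :=
  if Rle_dec y 0 then 0 else H (- ln y).

Section ExpMoments.

Variable H : R -> R.
Hypothesis H_cont : forall t, continuous H t.
Hypothesis H_lim : is_lim H p_infty 0.

Lemma continuous_log_pullback y : continuous (log_pullback H) y.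
Proof.
  destruct (Rtotal_order y 0) as [Hy | [-> | Hy]].
  - apply (continuous_ext_loc _ (fun _ => 0)); [|apply continuous_const].
    apply (filter_imp (fun z => z < 0)); [|now apply open_lt].
    intros z Hz; unfold log_pullback; destruct (Rle_dec z 0); [reflexivity | lra].
  - apply continuity_pt_filterlim, continuity_pt_locally; intros eps.
    apply is_lim_spec in H_lim; destruct (H_lim eps) as [T HT].
    exists (mkposreal (exp (- Rmax T 0)) (exp_pos _)); intros z Hz.
    change (Rabs (z - 0) < exp (- Rmax T 0)) in Hz; rewrite Rminus_0_r in Hz.
    unfold log_pullback; destruct (Rle_dec 0 0) as [_|]; [|lra].
    destruct (Rle_dec z 0); [rewrite Rminus_0_r, Rabs_R0; apply cond_pos|].
    rewrite Rminus_0_r; rewrite Rabs_pos_eq in Hz by lra.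
    specialize (HT (- ln z)); rewrite Rminus_0_r in HT; apply HT.
    assert (ln z < - Rmax T 0) by (rewrite <- (ln_exp (- Rmax T 0)); apply ln_increasing; lra).
    pose proof (Rmax_l T 0); lra.
  - apply (continuous_ext_loc _ (fun z => H (- ln z))).
    + apply (filter_imp (fun z => 0 < z)); [|now apply open_gt].
      intros z Hz; unfold log_pullback; destruct (Rle_dec z 0); [lra | reflexivity].
    + apply (continuous_comp (fun z => - ln z) H); [|apply H_cont].
      apply (continuous_opp ln), continuous_ln, Hy.
Qed.

Lemma log_pullback_exp t : log_pullback H (exp (- t)) = H t.
Proof.
  unfold log_pullback; destruct (Rle_dec (exp (- t)) 0) as [Hle|].
  - pose proof (exp_pos (- t)); lra.
  - now rewrite ln_exp, Ropp_involutive.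
Qed.

Lemma continuous_monomial_log_pullback k y :
  continuous (fun y => y ^ k * log_pullback H y) y.
Proof.
  apply (continuous_mult (fun y => y ^ k)); [|apply continuous_log_pullback].
  apply (@ex_derive_continuous R_AbsRing R_NormedModule); auto_derive; easy.
Qed.

Lemma RInt_log_pullback_exp k b :
  RInt (fun y => y ^ k * log_pullback H y) (exp (- b)) 1
  = RInt (fun t => exp (- INR (S k) * t) * H t) 0 b.
Proof.
  set (f y := y ^ k * log_pullback H y).
  symmetry; apply is_RInt_unique.
  replace (RInt f (exp (- b)) 1) with (opp (opp (RInt f (exp (- b)) (exp (- 0)))))
    by (rewrite opp_opp, Ropp_0, exp_0; reflexivity).
  apply (is_RInt_ext (fun t => opp (scal (- exp (- t)) (f (exp (- t)))))).
  { intros t _; unfold f; rewrite log_pullback_exp, pow_exp_INR, S_INR.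
    replace (- (INR k + 1) * t) with (- t + INR k * - t) by ring.
    rewrite exp_plus; change opp with Ropp; change scal with Rmult; simpl; ring. }
  apply (is_RInt_opp (V := R_NormedModule)), (is_RInt_swap (V := R_NormedModule)).
  apply (is_RInt_comp f (fun t => exp (- t)) (fun t => - exp (- t))).
  - intros; apply continuous_monomial_log_pullback.
  - intros t _; split; [auto_derive; [easy | ring]|].
    apply (@ex_derive_continuous R_AbsRing R_NormedModule); auto_derive; easy.
Qed.

Hypothesis H_exp_moments : forall k,
  is_lim (fun b => RInt (fun t => exp (- INR (S k) * t) * H t) 0 b) p_infty 0.

Lemma log_pullback_moments k : RInt (fun y => y ^ k * log_pullback H y) 0 1 = 0.
Proof.
  set (f y := y ^ k * log_pullback H y).
  assert (Hf : forall a b, ex_RInt f a b).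
  { intros a b; apply (ex_RInt_continuous (V := R_CompleteNormedModule)); intros.
    apply continuous_monomial_log_pullback. }
  apply Rbar_finite_eq, is_lim_const_eq.
  apply (is_lim_ext (fun b => RInt f 0 (exp (- b)) + RInt f (exp (- b)) 1)).
  { intros b; apply (RInt_Chasles (V := R_CompleteNormedModule)); apply Hf. }
  replace (Finite 0) with (Rbar_plus 0 0) by (simpl; f_equal; ring).
  apply (is_lim_plus _ _ _ 0 0); [| |easy].
  - replace (Finite 0) with (Finite (RInt f 0 0))
      by (f_equal; apply (RInt_point (V := R_CompleteNormedModule))).
    apply (is_lim_comp_continuous (fun b => exp (- b)) (RInt f 0)).
    + eapply is_lim_ext; [|apply (is_lim_exp_neg_mult 1 Rlt_0_1)].
      intros; simpl; f_equal; ring.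
    + apply (continuous_RInt_1 f 0 0); apply filter_forall; intros.
      apply (RInt_correct (V := R_CompleteNormedModule)), Hf.
  - apply (is_lim_ext (fun b => RInt (fun t => exp (- INR (S k) * t) * H t) 0 b)).
    + intros; symmetry; apply RInt_log_pullback_exp.
    + apply H_exp_moments.
Qed.

Lemma exp_moments_vanish t : 0 < t -> H t = 0.
Proof.
  intros Ht; rewrite <- log_pullback_exp.
  apply moments_vanish; [apply continuous_log_pullback | apply log_pullback_moments|].
  split; [apply exp_pos | rewrite <- exp_0; apply exp_increasing; lra].
Qed.

End ExpMoments.

Lemma is_derive_0_pos_const (D : R -> R) b : 0 <= b -> (forall x, continuous D x) ->
  (forall x, 0 < x -> is_derive D x 0) -> D b = D 0.
Proof.
  intros Hb HC HD.
  destruct (MVT_gen D 0 b (fun _ => 0)) as [c [_ Hc]]; [| |lra].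
  - intros x Hx; rewrite Rmin_left, Rmax_right in Hx by lra; apply HD; lra.
  - intros x _; apply continuity_pt_filterlim, HC.
Qed.

Section Lerch.

Variable v : R -> R.
Hypothesis v_cont : forall t, 0 < t -> continuous v t.
Hypothesis v_laplace : forall n : nat,
  is_RInt_gen (fun t => exp (- INR n * t) * v t) (at_point 0) (Rbar_locally p_infty) 0.

Lemma ex_RInt_exp_mul n b : 0 <= b -> ex_RInt (fun t => exp (- INR n * t) * v t) 0 b.
Proof. exact (proj1 (is_RInt_gen_at_point_p_infty _ _ _ (v_laplace n)) b). Qed.

Lemma is_lim_RInt_exp_mul n :
  is_lim (fun b => RInt (fun t => exp (- INR n * t) * v t) 0 b) p_infty 0.
Proof. exact (proj2 (is_RInt_gen_at_point_p_infty _ _ _ (v_laplace n))). Qed.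

Lemma exp_0_mul (f : R -> R) t : exp (- INR 0 * t) * f t = f t.
Proof. simpl; rewrite Ropp_0, Rmult_0_l, exp_0; ring. Qed.

Lemma ex_RInt_v b : 0 <= b -> ex_RInt v 0 b.
Proof.
  intros Hb; apply (ex_RInt_ext (fun t => exp (- INR 0 * t) * v t)).
  - intros; apply exp_0_mul.
  - now apply ex_RInt_exp_mul.
Qed.

Lemma is_lim_prim_v : is_lim (prim v) p_infty 0.
Proof.
  apply (is_lim_ext_loc (fun b => RInt (fun t => exp (- INR 0 * t) * v t) 0 b));
    [|apply is_lim_RInt_exp_mul].
  exists 0; intros b Hb; rewrite (prim_nonneg v b) by lra.
  apply RInt_ext; intros; apply exp_0_mul.
Qed.

Lemma RInt_exp_mul_by_parts n b : 0 < b ->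
  RInt (fun t => exp (- INR n * t) * v t) 0 b
  = exp (- INR n * b) * prim v b + INR n * RInt (fun t => exp (- INR n * t) * prim v t) 0 b.
Proof.
  intros Hb.
  set (e t := exp (- INR n * t)).
  assert (De : forall t, is_derive e t (- INR n * e t)) by (intros; unfold e; auto_derive; [easy|ring]).
  assert (Ce : forall t, continuous e t)
    by (intros; apply (@ex_derive_continuous R_AbsRing R_NormedModule); eexists; apply De).
  assert (Cev : forall t, continuous (fun t => e t * prim v t) t)
    by (intros; apply (continuous_mult e); [apply Ce | apply continuous_prim, ex_RInt_v]).
  assert (Iev : forall c, 0 <= c -> ex_RInt (fun t => e t * prim v t) 0 c)
    by (intros; apply (ex_RInt_continuous (V := R_CompleteNormedModule)); intros; apply Cev).
  set (D x := prim (fun t => e t * v t) x - e x * prim v x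
              - INR n * prim (fun t => e t * prim v t) x).
  assert (CD : forall x, continuous D x).
  { intros x; apply (continuous_minus _ (fun x => INR n * prim _ x));
      [apply (continuous_minus _ (fun x => e x * prim v x)) |].
    - apply continuous_prim, ex_RInt_exp_mul.
    - apply (continuous_mult e); [apply Ce | apply continuous_prim, ex_RInt_v].
    - apply (continuous_scal_r (INR n) (prim _)), continuous_prim, Iev. }
  assert (DD : forall x, 0 < x -> is_derive D x 0).
  { intros x Hx.
    replace 0 with (e x * v x - (- INR n * e x * prim v x + e x * v x)
                    - INR n * (e x * prim v x)) by ring.
    apply (is_derive_minus _ (fun x => INR n * prim _ x));
      [apply (is_derive_minus _ (fun x => e x * prim v x)) |].
    - apply (is_derive_prim (fun t => e t * v t)); [apply ex_RInt_exp_mul | exact Hx |].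
      apply (continuous_mult e); [apply Ce | apply v_cont, Hx].
    - apply (is_derive_mult e); [apply De | exact (is_derive_prim v ex_RInt_v x Hx (v_cont x Hx)) |].
      intros; apply Rmult_comm.
    - apply (is_derive_scal (prim _)), (is_derive_prim (fun t => e t * prim v t));
        [exact Iev | exact Hx | apply Cev]. }
  assert (Db : D b = 0)
    by (rewrite (is_derive_0_pos_const D b); [unfold D; rewrite !prim_at_0; ring | lra | ..]; assumption).
  unfold D in Db; rewrite (prim_nonneg (fun t => e t * v t) b),
    (prim_nonneg (fun t => e t * prim v t) b) in Db by lra.
  unfold e in Db; cbv beta in Db; lra.
Qed.

Lemma is_lim_RInt_exp_mul_prim n :
  is_lim (fun b => RInt (fun t => exp (- INR (S n) * t) * prim v t) 0 b) p_infty 0.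
Proof.
  assert (Hn : 0 < INR (S n)) by apply lt_0_INR, Nat.lt_0_succ.
  apply (is_lim_ext_loc (fun b => / INR (S n) * (RInt (fun t => exp (- INR (S n) * t) * v t) 0 b
                                  - exp (- INR (S n) * b) * prim v b))).
  { exists 0; intros b Hb; rewrite (RInt_exp_mul_by_parts (S n) b Hb); field; lra. }
  replace (Finite 0) with (Rbar_mult (/ INR (S n)) (Rbar_minus 0 (Rbar_mult 0 0)))
    by (simpl; f_equal; ring).
  apply is_lim_scal_l, (is_lim_minus _ _ _ 0 (Rbar_mult 0 0)).
  - apply is_lim_RInt_exp_mul.
  - apply is_lim_mult; [apply is_lim_exp_neg_mult; exact Hn | apply is_lim_prim_v | easy].
  - easy.
Qed.

(* By parts, the transforms of [prim v] vanish at all positive integers, so all moments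
   of its log-pullback vanish: [prim v] is 0 on (0, +oo), and so is its derivative [v]. *)
Lemma laplace_nat_vanish t : 0 < t -> v t = 0.
Proof.
  intros Ht.
  assert (Hz : forall s, 0 < s -> prim v s = 0).
  { apply (exp_moments_vanish (prim v)).
    - apply continuous_prim, ex_RInt_v.
    - apply is_lim_prim_v.
    - apply is_lim_RInt_exp_mul_prim. }
  assert (D0 : is_derive (prim v) t 0).
  { apply (is_derive_ext_loc (fun _ => 0)); [|apply (@is_derive_const R_AbsRing R_NormedModule 0)].
    apply (filter_imp (fun s => 0 < s)); [|now apply open_gt].
    intros s Hs; symmetry; apply Hz, Hs. }
  rewrite <- (is_derive_unique _ _ _ (is_derive_prim v ex_RInt_v t Ht (v_cont t Ht))).
  exact (is_derive_unique _ _ _ D0).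
Qed.

End Lerch.

(* Multiplying by [exp (- x0 t)] with [x0 > sigma] moves the half-line of vanishing
   transforms onto the natural numbers. *)
Lemma laplace_zero_vanish (h : R -> R) sigma : (forall t, 0 < t -> continuous h t) ->
  (forall xi, sigma < xi -> is_laplace h xi 0) -> forall t, 0 < t -> h t = 0.
Proof.
  intros Hc Hl t Ht.
  set (x0 := Rmax sigma 0 + 1).
  assert (Hv : exp (- x0 * t) * h t = 0).
  { apply (laplace_nat_vanish (fun t => exp (- x0 * t) * h t)); [| |exact Ht].
    - intros s Hs; apply (continuous_mult (fun s => exp (- x0 * s))); [|now apply Hc].
      apply (@ex_derive_continuous R_AbsRing R_NormedModule); auto_derive; easy.
    - intros n.
      assert (Hn : sigma < x0 + INR n)
        by (unfold x0; pose proof (Rmax_l sigma 0); pose proof (pos_INR n); lra).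
      eapply is_RInt_gen_ext; [|exact (Hl _ Hn)].
      apply filter_forall; intros _ s _.
      rewrite <- Rmult_assoc, <- exp_plus; f_equal; f_equal; ring. }
  apply Rmult_integral in Hv as [He | Hh]; [pose proof (exp_pos (- x0 * t)); lra | exact Hh].
Qed.

Lemma IsInvLaplace_es_eval f F l : IsInvLaplace f F -> es_rates (fun x => 0 <= x) l ->
  (forall xi, 0 < xi -> F xi = es_laplace l xi) -> forall t, 0 < t -> f t = es_eval l t.
Proof.
  intros [Hc [sigma Hs]] Hl HF t Ht; apply Rminus_diag_uniq; revert t Ht.
  apply (laplace_zero_vanish _ (Rmax sigma 0)).
  - intros t Ht; apply (continuous_minus f); [now apply Hc | apply continuous_es_eval].
  - intros xi Hxi; pose proof (Rmax_l sigma 0); pose proof (Rmax_r sigma 0).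
    replace 0 with (F xi - es_laplace l xi) by (rewrite HF; [ring | lra]).
    apply is_laplace_minus; [apply Hs; lra|].
    apply is_laplace_es_eval; revert Hl; apply es_rates_impl; intros; lra.
Qed.

Lemma cd_succ k xi : 0 < xi ->
  c (S k) xi = (8 * INR k * c k xi + 10 * d k xi) / (xi + 8 * INR (S k) + 10) /\
  d (S k) xi = (13 * c (S k) xi + 8 * INR k * d k xi) / (xi + 8 * INR (S k) + 13).
Proof.
  intros Hxi; assert (Hk := pos_INR k).
  unfold c, d; cbn [vcd]; unfold mat2_app, Nmat, mat2_mul, mat2_inv; cbn [m11 m12 m21 m22 fst snd].
  rewrite S_INR; replace (INR k + 1 - 1) with (INR k) by ring.
  split; field; repeat split; nra.
Qed.

Lemma d0_pos xi : 0 < xi -> 0 < d 0 xi.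
Proof. intros H; unfold d; simpl; apply Rdiv_lt_0_compat; nra. Qed.

(* For [j >= 1], [c_es j] and [d_es j] have transforms [c_j / d_0] and [d_j / d_0];
   [c_es 0] has transform [c_0 / d_0 - 1] and [d_es 0] is empty.  The step to [j = 1]
   would need the transform of [d_0 / d_0 = 1], which is no exponential sum, so [v_1] is
   written out: [c_1 / d_0 = 10 / (xi + 18)]. *)
Fixpoint cd_es (j : nat) : list (R * R) * list (R * R) :=
  match j with
  | O => ((-10, 23) :: nil, nil)
  | 1%nat => ((10, 18) :: nil, es_solve 21 (es_scale 13 ((10, 18) :: nil)))
  | S k =>
      let cs := es_solve (8 * INR (S k) + 10)
                  (es_scale (8 * INR k) (fst (cd_es k)) ++ es_scale 10 (snd (cd_es k))) in
      (cs, es_solve (8 * INR (S k) + 13) (es_scale 13 cs ++ es_scale (8 * INR k) (snd (cd_es k))))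
  end.

Definition c_es (j : nat) : list (R * R) := fst (cd_es j).
Definition d_es (j : nat) : list (R * R) := snd (cd_es j).

Lemma c_es_SS k : c_es (S (S k)) = es_solve (8 * INR (S (S k)) + 10)
  (es_scale (8 * INR (S k)) (c_es (S k)) ++ es_scale 10 (d_es (S k))).
Proof. reflexivity. Qed.

Lemma d_es_SS k : d_es (S (S k)) = es_solve (8 * INR (S (S k)) + 13)
  (es_scale 13 (c_es (S (S k))) ++ es_scale (8 * INR (S k)) (d_es (S k))).
Proof. reflexivity. Qed.

Lemma cd_es_rates k :
  es_rates (fun x => 1 < x <= 8 * INR k + 18) (c_es (S k)) /\
  es_rates (fun x => 1 < x <= 8 * INR k + 21) (d_es (S k)).
Proof.
  induction k as [|k [IHc IHd]].
  - split; repeat constructor; simpl; lra.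
  - assert (Hk := pos_INR k); rewrite S_INR.
    assert (Hc : es_rates (fun x => 1 < x <= 8 * (INR k + 1) + 18) (c_es (S (S k)))).
    { rewrite c_es_SS; apply es_rates_solve; [rewrite !S_INR; lra|].
      apply es_rates_app; apply es_rates_scale;
        [revert IHc | revert IHd]; apply es_rates_impl; intros; lra. }
    split; [exact Hc|].
    rewrite d_es_SS; apply es_rates_solve; [rewrite !S_INR; lra|].
    apply es_rates_app; apply es_rates_scale;
      [revert Hc | revert IHd]; apply es_rates_impl; intros; lra.
Qed.

Lemma cd_es_rates_gt1 j :
  es_rates (fun x => 1 < x) (c_es j) /\ es_rates (fun x => 1 < x) (d_es j).
Proof.
  destruct j as [|k]; [split; repeat constructor; simpl; lra|].
  destruct (cd_es_rates k) as [Hc Hd].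
  split; [revert Hc | revert Hd]; apply es_rates_impl; intros; lra.
Qed.

Lemma cd_es_sources_rates k :
  es_rates (fun x => 1 < x < 8 * INR (S (S k)) + 10)
    (es_scale (8 * INR (S k)) (c_es (S k)) ++ es_scale 10 (d_es (S k))) /\
  es_rates (fun x => 1 < x < 8 * INR (S (S k)) + 13)
    (es_scale 13 (c_es (S (S k))) ++ es_scale (8 * INR (S k)) (d_es (S k))).
Proof.
  assert (Hk := pos_INR k).
  destruct (cd_es_rates k) as [Bc Bd]; destruct (cd_es_rates (S k)) as [Bc' _].
  rewrite !S_INR in *.
  split; apply es_rates_app; apply es_rates_scale;
    [revert Bc | revert Bd | revert Bc' | revert Bd]; apply es_rates_impl; intros; lra.
Qed.

Lemma es_laplace_cd_es k xi : 0 < xi ->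
  es_laplace (c_es (S k)) xi = c (S k) xi / d 0 xi /\
  es_laplace (d_es (S k)) xi = d (S k) xi / d 0 xi.
Proof.
  intros Hxi; assert (D0 := d0_pos xi Hxi).
  assert (Sep : forall mu l, es_rates (fun x => 1 < x < mu) l ->
            es_rates (fun x => x <> mu /\ xi + x <> 0) l)
    by (intros mu l; apply es_rates_impl; intros; lra).
  induction k as [|k [IHc IHd]].
  - destruct (cd_succ 0 xi Hxi) as [C1 D1]; simpl INR in C1, D1.
    assert (L1 : es_laplace (c_es 1) xi = c 1 xi / d 0 xi)
      by (rewrite C1; simpl; field; lra).
    split; [exact L1|].
    change (d_es 1) with (es_solve 21 (es_scale 13 (c_es 1))).
    rewrite es_laplace_solve, es_laplace_scale, L1, D1 by (try apply Sep; repeat constructor; simpl; lra).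
    field; lra.
  - destruct (cd_es_sources_rates k) as [Sc Sd].
    destruct (cd_succ (S k) xi Hxi) as [C1 D1].
    assert (Hk := pos_INR k); rewrite !S_INR in *.
    assert (L1 : es_laplace (c_es (S (S k))) xi = c (S (S k)) xi / d 0 xi).
    { rewrite c_es_SS, es_laplace_solve, es_laplace_app, !es_laplace_scale, IHc, IHd, C1
        by (rewrite ?S_INR; try apply Sep; assumption || lra).
      rewrite !S_INR; field; lra. }
    split; [exact L1|].
    rewrite d_es_SS, es_laplace_solve, es_laplace_app, !es_laplace_scale, L1, IHd, D1
      by (rewrite ?S_INR; try apply Sep; assumption || lra).
    rewrite !S_INR; field; lra.
Qed.

Lemma cd_es_ode k t :
  es_eval (es_deriv (c_es (S k))) t + (8 * INR (S k) + 10) * es_eval (c_es (S k)) t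
  = 8 * INR k * es_eval (c_es k) t + 10 * es_eval (d_es k) t /\
  es_eval (es_deriv (d_es (S k))) t + (8 * INR (S k) + 13) * es_eval (d_es (S k)) t
  = 13 * es_eval (c_es (S k)) t + 8 * INR k * es_eval (d_es k) t.
Proof.
  destruct k as [|k].
  - simpl INR; split.
    + simpl; ring.
    + change (d_es 1) with (es_solve 21 (es_scale 13 (c_es 1))).
      replace (8 * 1 + 13) with 21 by ring.
      rewrite es_solve_ode, es_eval_scale by (repeat constructor; simpl; lra).
      simpl; ring.
  - destruct (cd_es_sources_rates k) as [Sc Sd]; split;
      [rewrite c_es_SS, es_solve_ode | rewrite d_es_SS, es_solve_ode];
      rewrite ?es_eval_app, ?es_eval_scale; try reflexivity;
      [revert Sc | revert Sd]; apply es_rates_impl; intros; lra.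
Qed.

Lemma cd_es_ode_0 t :
  es_eval (es_deriv (c_es 0)) t + 10 * es_eval (c_es 0) t = 130 * exp (-23 * t) /\
  es_eval (es_deriv (d_es 0)) t + 13 * es_eval (d_es 0) t - 13 * es_eval (c_es 0) t
  = 130 * exp (-23 * t).
Proof. simpl; replace (- (23) * t) with (-23 * t) by ring; split; ring. Qed.

Lemma sum_f_R0_telescope (u w : nat -> R) M : (forall k, u (S k) = w k) ->
  sum_f_R0 (fun j => u j - w j) M = u 0%nat - w M.
Proof. intros H; induction M as [|M IH]; simpl; [|rewrite IH, H]; ring. Qed.

Lemma is_derive_sum_f_R0 (F : nat -> R -> R) (dF : nat -> R) t M :
  (forall j, is_derive (F j) t (dF j)) ->
  is_derive (fun s => sum_f_R0 (fun j => F j s) M) t (sum_f_R0 dF M).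
Proof.
  intros H; induction M as [|M IH]; simpl; [apply H|].
  apply (is_derive_plus (fun s => sum_f_R0 (fun j => F j s) M) (F (S M))); auto.
Qed.

Lemma is_derive_div_pow_1_sq a j g :
  is_derive (fun y => a / (1 + y ^ 2) ^ j) g (a * (- INR j * (2 * g)) / (1 + g ^ 2) ^ S j).
Proof.
  assert (P : 0 < 1 + g ^ 2) by nra.
  auto_derive; [apply pow_nonzero; lra|].
  destruct j as [|j]; simpl pred; [simpl; field; lra|].
  rewrite <- !tech_pow_Rmult; assert ((1 + g ^ 2) ^ j <> 0) by (apply pow_nonzero; lra).
  simpl; field; split; [assumption | nra].
Qed.

Lemma Derive_minus_is_derive (f h : R -> R) x dh : ex_derive f x -> is_derive h x dh ->
  ex_derive (fun y => f y - h y) x /\ Derive (fun y => f y - h y) x = Derive f x - dh.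
Proof.
  intros Hf Hh; assert (H := is_derive_minus _ _ _ _ _ (Derive_correct _ _ Hf) Hh).
  split; [eexists; exact H | exact (is_derive_unique _ _ _ H)].
Qed.

Section Truncation.

Variables (C D : nat -> R -> R) (C' D' : nat -> R) (t g e : R).
Hypothesis C_deriv : forall j, is_derive (C j) t (C' j).
Hypothesis D_deriv : forall j, is_derive (D j) t (D' j).
Hypothesis C_eq0 : C' 0%nat + 10 * C 0%nat t = e.
Hypothesis D_eq0 : D' 0%nat + 13 * D 0%nat t - 13 * C 0%nat t = e.
Hypothesis C_rec : forall k,
  C' (S k) + (8 * INR (S k) + 10) * C (S k) t = 8 * INR k * C k t + 10 * D k t.
Hypothesis D_rec : forall k,
  D' (S k) + (8 * INR (S k) + 13) * D (S k) t = 13 * C (S k) t + 8 * INR k * D k t.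

Lemma series_C_residual M :
  sum_f_R0 (fun j => C' j / (1 + g ^ 2) ^ j) M
  - 4 * g * sum_f_R0 (fun j => C j t * (- INR j * (2 * g)) / (1 + g ^ 2) ^ S j) M
  + 10 * sum_f_R0 (fun j => C j t / (1 + g ^ 2) ^ j) M
  - 10 / (1 + g ^ 2) * sum_f_R0 (fun j => D j t / (1 + g ^ 2) ^ j) M
  = e - (8 * INR M * C M t + 10 * D M t) / (1 + g ^ 2) ^ S M.
Proof.
  assert (P : 0 < 1 + g ^ 2) by nra.
  set (u j := (C' j + (8 * INR j + 10) * C j t) / (1 + g ^ 2) ^ j).
  set (w j := (8 * INR j * C j t + 10 * D j t) / (1 + g ^ 2) ^ S j).
  transitivity (sum_f_R0 (fun j => u j - w j) M).
  - rewrite !scal_sum, <- minus_sum, <- plus_sum, <- minus_sum.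
    apply sum_eq; intros j _; unfold u, w.
    assert ((1 + g ^ 2) ^ j <> 0) by (apply pow_nonzero; lra).
    cbv beta; rewrite <- !(tech_pow_Rmult (1 + g ^ 2)); field; repeat split; try assumption; lra.
  - rewrite sum_f_R0_telescope; [unfold u, w; rewrite <- C_eq0, pow_O; simpl INR; unfold Rdiv; rewrite Rinv_1; ring|].
    intros k; unfold u, w; cbv beta; rewrite C_rec; reflexivity.
Qed.

Lemma series_D_residual M :
  sum_f_R0 (fun j => D' j / (1 + g ^ 2) ^ j) M
  - 4 * g * sum_f_R0 (fun j => D j t * (- INR j * (2 * g)) / (1 + g ^ 2) ^ S j) M
  + 13 * sum_f_R0 (fun j => D j t / (1 + g ^ 2) ^ j) M
  - 13 * sum_f_R0 (fun j => C j t / (1 + g ^ 2) ^ j) M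
  = e - 8 * INR M * D M t / (1 + g ^ 2) ^ S M.
Proof.
  assert (P : 0 < 1 + g ^ 2) by nra.
  set (u j := (D' j + (8 * INR j + 13) * D j t - 13 * C j t) / (1 + g ^ 2) ^ j).
  set (w j := 8 * INR j * D j t / (1 + g ^ 2) ^ S j).
  transitivity (sum_f_R0 (fun j => u j - w j) M).
  - rewrite !scal_sum, <- minus_sum, <- plus_sum, <- minus_sum.
    apply sum_eq; intros j _; unfold u, w.
    assert ((1 + g ^ 2) ^ j <> 0) by (apply pow_nonzero; lra).
    cbv beta; rewrite <- !(tech_pow_Rmult (1 + g ^ 2)); field; repeat split; try assumption; lra.
  - rewrite sum_f_R0_telescope;
      [unfold u, w; rewrite <- D_eq0, pow_O; simpl INR; unfold Rdiv; rewrite Rinv_1; ring|].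
    intros k; unfold u, w; cbv beta; rewrite D_rec; unfold Rdiv; f_equal; ring.
Qed.

Lemma is_derive_series_t (F : nat -> R -> R) (F' : nat -> R) M :
  (forall j, is_derive (F j) t (F' j)) ->
  is_derive (fun s => sum_f_R0 (fun j => F j s / (1 + g ^ 2) ^ j) M) t
    (sum_f_R0 (fun j => F' j / (1 + g ^ 2) ^ j) M).
Proof.
  intros HF; apply (is_derive_sum_f_R0 (fun j s => F j s / (1 + g ^ 2) ^ j)); intros j.
  unfold Rdiv; rewrite (Rmult_comm (F' j)).
  apply (is_derive_ext (fun s => / (1 + g ^ 2) ^ j * F j s)); [intros; apply Rmult_comm|].
  apply is_derive_scal, HF.
Qed.

Lemma is_derive_series_g (F : nat -> R) M :
  is_derive (fun y => sum_f_R0 (fun j => F j / (1 + y ^ 2) ^ j) M) g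
    (sum_f_R0 (fun j => F j * (- INR j * (2 * g)) / (1 + g ^ 2) ^ S j) M).
Proof.
  apply (is_derive_sum_f_R0 (fun j y => F j / (1 + y ^ 2) ^ j)); intros j.
  apply is_derive_div_pow_1_sq.
Qed.

Lemma truncation_residual (w1 w2 : R -> R -> R) M :
  ex_derive (fun s => w1 s g) t /\ ex_derive (fun y => w1 t y) g /\
  ex_derive (fun s => w2 s g) t /\ ex_derive (fun y => w2 t y) g /\
  Derive (fun s => w1 s g) t - 4 * g * Derive (fun y => w1 t y) g
    + 10 * w1 t g - 10 / (1 + g ^ 2) * w2 t g = e /\
  Derive (fun s => w2 s g) t - 4 * g * Derive (fun y => w2 t y) g
    + 13 * w2 t g - 13 * w1 t g = e ->
  let alpha := fun t g => w1 t g - sum_f_R0 (fun j => C j t / (1 + g ^ 2) ^ j) M in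
  let beta := fun t g => w2 t g - sum_f_R0 (fun j => D j t / (1 + g ^ 2) ^ j) M in
  ex_derive (fun s => alpha s g) t /\ ex_derive (fun y => alpha t y) g /\
  ex_derive (fun s => beta s g) t /\ ex_derive (fun y => beta t y) g /\
  Derive (fun s => alpha s g) t - 4 * g * Derive (fun y => alpha t y) g
    + 10 * alpha t g - 10 / (1 + g ^ 2) * beta t g
    = (8 * INR M * C M t + 10 * D M t) / (1 + g ^ 2) ^ (M + 1) /\
  Derive (fun s => beta s g) t - 4 * g * Derive (fun y => beta t y) g
    + 13 * beta t g - 13 * alpha t g
    = (8 * INR M * D M t) / (1 + g ^ 2) ^ (M + 1).
Proof.
  intros [w1t [w1g [w2t [w2g [E1 E2]]]]] alpha beta.
  destruct (Derive_minus_is_derive (fun s => w1 s g) _ _ _ w1t (is_derive_series_t C C' M C_deriv))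
    as [At DAt].
  destruct (Derive_minus_is_derive (fun y => w1 t y) _ _ _ w1g (is_derive_series_g (fun j => C j t) M))
    as [Ag DAg].
  destruct (Derive_minus_is_derive (fun s => w2 s g) _ _ _ w2t (is_derive_series_t D D' M D_deriv))
    as [Bt DBt].
  destruct (Derive_minus_is_derive (fun y => w2 t y) _ _ _ w2g (is_derive_series_g (fun j => D j t) M))
    as [Bg DBg].
  unfold alpha, beta; rewrite Nat.add_1_r; repeat split; try assumption.
  - rewrite DAt, DAg; pose proof (series_C_residual M); lra.
  - rewrite DBt, DBg; pose proof (series_D_residual M); lra.
Qed.

End Truncation.

Lemma decays_faster_than_exp_pos_ext f g : (forall t, 0 < t -> f t = g t) ->
  decays_faster_than_exp g -> decays_faster_than_exp f.
Proof.
  intros E; apply is_lim_ext_loc; exists 0; intros t Ht; rewrite E by exact Ht; reflexivity.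
Qed.

Lemma is_derive_pos_ext (f g : R -> R) t dg : (forall s, 0 < s -> f s = g s) -> 0 < t ->
  is_derive g t dg -> is_derive f t dg.
Proof.
  intros E Ht; apply is_derive_ext_loc.
  apply (filter_imp (fun s => 0 < s)); [|now apply open_gt].
  intros s Hs; symmetry; apply E, Hs.
Qed.

Lemma inv_laplace_cd_es (cr dr : nat -> R -> R) :
  IsInvLaplace (cr 0%nat) (fun xi => c 0 xi / d 0 xi - 1) ->
  (forall t, dr 0%nat t = 0) ->
  (forall j, (1 <= j)%nat ->
     IsInvLaplace (cr j) (fun xi => c j xi / d 0 xi) /\
     IsInvLaplace (dr j) (fun xi => d j xi / d 0 xi)) ->
  forall j t, 0 < t -> cr j t = es_eval (c_es j) t /\ dr j t = es_eval (d_es j) t.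
Proof.
  intros Hc0 Hd0 Hcd j t Ht.
  destruct (cd_es_rates_gt1 j) as [Rc Rd].
  assert (Nc : es_rates (fun x => 0 <= x) (c_es j)) by (revert Rc; apply es_rates_impl; intros; lra).
  assert (Nd : es_rates (fun x => 0 <= x) (d_es j)) by (revert Rd; apply es_rates_impl; intros; lra).
  destruct j as [|k].
  - split; [|rewrite Hd0; reflexivity].
    apply (IsInvLaplace_es_eval _ _ _ Hc0 Nc); [|exact Ht].
    intros xi Hxi; unfold c, d; simpl; field; lra.
  - destruct (Hcd (S k) ltac:(lia)) as [Hc Hd].
    split; [apply (IsInvLaplace_es_eval _ _ _ Hc Nc) | apply (IsInvLaplace_es_eval _ _ _ Hd Nd)];
      try exact Ht; intros xi Hxi; symmetry; apply (es_laplace_cd_es k xi Hxi).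
Qed.

Theorem lemma2p2
  (cr dr : nat -> R -> R) (w1 w2 : R -> R -> R) :
  (* \mathring c_0 = F^{-1}(c_0/d_0 - 1), \mathring d_0 = 0 *)
  IsInvLaplace (cr 0%nat) (fun xi => c 0 xi / d 0 xi - 1) ->
  (forall t, dr 0%nat t = 0) ->
  (* (\mathring c_j, \mathring d_j) = F^{-1}((c_j, d_j)/d_0), j >= 1 *)
  (forall j, (1 <= j)%nat ->
     IsInvLaplace (cr j) (fun xi => c j xi / d 0 xi) /\
     IsInvLaplace (dr j) (fun xi => d j xi / d 0 xi)) ->
  (* \mathring w_1, \mathring w_2 solve the system *)
  (forall t g, 0 < t -> 0 < g ->
     ex_derive (fun s => w1 s g) t /\ ex_derive (fun y => w1 t y) g /\
     ex_derive (fun s => w2 s g) t /\ ex_derive (fun y => w2 t y) g /\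
     Derive (fun s => w1 s g) t - 4 * g * Derive (fun y => w1 t y) g
       + 10 * w1 t g - 10 / (1 + g ^ 2) * w2 t g = 130 * exp (-23 * t) /\
     Derive (fun s => w2 s g) t - 4 * g * Derive (fun y => w2 t y) g
       + 13 * w2 t g - 13 * w1 t g = 130 * exp (-23 * t)) ->
  (forall g, 0 <= g -> w1 0 g = -10 * (g ^ 2 / (1 + g ^ 2))) ->
  (forall g, 0 <= g -> w2 0 g = 0) ->
  (forall k, decays_faster_than_exp (cr k) /\ decays_faster_than_exp (dr k)) /\
  (forall M : nat, (2 <= M)%nat ->
     let alpha := fun t g =>
       w1 t g - sum_f_R0 (fun j => cr j t / (1 + g ^ 2) ^ j) M in
     let beta := fun t g =>
       w2 t g - sum_f_R0 (fun j => dr j t / (1 + g ^ 2) ^ j) M in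
     forall t g, 0 < t -> 0 < g ->
       ex_derive (fun s => alpha s g) t /\ ex_derive (fun y => alpha t y) g /\
       ex_derive (fun s => beta s g) t /\ ex_derive (fun y => beta t y) g /\
       Derive (fun s => alpha s g) t - 4 * g * Derive (fun y => alpha t y) g
         + 10 * alpha t g - 10 / (1 + g ^ 2) * beta t g
         = (8 * INR M * cr M t + 10 * dr M t) / (1 + g ^ 2) ^ (M + 1) /\
       Derive (fun s => beta s g) t - 4 * g * Derive (fun y => beta t y) g
         + 13 * beta t g - 13 * alpha t g
         = (8 * INR M * dr M t) / (1 + g ^ 2) ^ (M + 1)).
Proof.
  intros Hc0 Hd0 Hcd Hw _ _.
  assert (E := inv_laplace_cd_es cr dr Hc0 Hd0 Hcd).
  split.
  - intros k; destruct (cd_es_rates_gt1 k) as [Rc Rd]; split.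
    + apply (decays_faster_than_exp_pos_ext _ (es_eval (c_es k))); [|now apply es_eval_decays].
      intros t Ht; apply (E k t Ht).
    + apply (decays_faster_than_exp_pos_ext _ (es_eval (d_es k))); [|now apply es_eval_decays].
      intros t Ht; apply (E k t Ht).
  - intros M _ alpha beta t g Ht Hg.
    refine (truncation_residual cr dr (fun j => es_eval (es_deriv (c_es j)) t)
              (fun j => es_eval (es_deriv (d_es j)) t) t g (130 * exp (-23 * t))
              _ _ _ _ _ _ w1 w2 M (Hw t g Ht Hg));
      try intros j; rewrite ?(proj1 (E _ t Ht)), ?(proj2 (E _ t Ht)).
    + apply (is_derive_pos_ext _ (es_eval (c_es j)));
        [intros s Hs; apply (E j s Hs) | exact Ht | apply is_derive_es_eval].
    + apply (is_derive_pos_ext _ (es_eval (d_es j)));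
        [intros s Hs; apply (E j s Hs) | exact Ht | apply is_derive_es_eval].
    + apply cd_es_ode_0.
    + apply cd_es_ode_0.
    + apply cd_es_ode.
    + apply cd_es_ode.
Qed.
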